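(* Let $G\le\mathrm{Aut}(\mathcal{T}_d)$ be any self-similar group. Then every non-trivial element of the Röver–Nekrashevych group $V_d(G)$ has infinitely many $[F_d,F_d]$-conjugates; equivalently, the inclusion $L([F_d,F_d])\subseteq L(V_d(G))$ is irreducible.
   Context: Fix $d\ge2$. $\mathcal{T}_d$ is the infinite rooted $d$-regular tree with vertex set $\{1,\dots,d\}^*$ (finite words, root the empty word), $w$ adjacent to $wi$. Every automorphism permutes the level-1 vertices, giving $\rho:\mathrm{Aut}(\mathcal{T}_d)\to S_d$. Let $\mathcal{T}_d(i)$ be the subtree spanned by words $iw$ and $\delta_i:\mathcal{T}_d\to\mathcal{T}_d(i)$, $w\mapsto iw$. For $g\in\mathrm{Aut}(\mathcal{T}_d)$ put $\phi_i(g)=\delta^{-1}_{\rho(g)i}\circ g|_{\mathcal{T}_d(i)}\circ\delta_i$. $G\le\mathrm{Aut}(\mathcal{T}_d)$ is self-similar if $\phi_i(G)\subseteq G$ for all $i$. Let $C_d=\{1,\dots,d\}^{\mathbb{N}}$ (the boundary of $\mathcal{T}_d$, on which $\mathrm{Aut}(\mathcal{T}_d)$ acts), and for $w\in\{1,\dots,d\}^*$ let $C_d(w)=\{w\kappa:\kappa\in C_d\}$ with homeomorphism $h_w:C_d\to C_d(w)$, $\kappa\mapsto w\kappa$. $V_d(G)$ is the group of homeomorphisms of $C_d$ obtained by choosing two partitions of $C_d$ into the same number $n$ of cones $C_d(w_1^+),\dots,C_d(w_n^+)$ and $C_d(w_1^-),\dots,C_d(w_n^-)$, a bijection $i\mapsto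 j(i)$, and $g_1,\dots,g_n\in G$, and mapping $C_d(w_i^+)$ to $C_d(w_{j(i)}^-)$ via $h_{w_{j(i)}^-}\circ g_i\circ h_{w_i^+}^{-1}$. $F_d\le V_d(G)$ is the subgroup of such homeomorphisms with all $g_i=1$ that preserve the lexicographic order of $C_d$ (the Higman–Thompson group $F_d$), and $[F_d,F_d]$ its commutator subgroup. An inclusion $N\subseteq M$ of von Neumann algebras is irreducible if $N'\cap M\subseteq N$. $L(G)$ is the group von Neumann algebra. *)

(* alphabet {1..d} is rendered as 'I_d. *)
From mathcomp Require Import all_boot.
From Stdlib Require List.

Set Implicit Arguments.
Unset Strict Implicit.
Unset Printing Implicit Defensive.

(* Vertices of T_d: finite words; w is adjacent to (rcons w i). *)
Definition word (d : nat) := seq 'I_d.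
Definition bnd (d : nat) := nat -> 'I_d.
Definition tmap (d : nat) := word d -> word d.

(* Automorphisms of the rooted tree T_d: bijections fixing the root and
   mapping children of w to children of g w (hence preserving adjacency). *)
Definition tree_aut d (g : tmap d) : Prop :=
  bijective g /\ g [::] = [::] /\
  (forall w (i : 'I_d), exists j : 'I_d, g (rcons w i) = rcons (g w) j).

(* phi_i(g) = delta^{-1}_{rho(g) i} o g|_{T_d(i)} o delta_i *)
Definition sect d (i : 'I_d) (g : tmap d) : tmap d :=
  fun w => behead (g (i :: w)).

Definition is_aut_subgroup d (G : tmap d -> Prop) : Prop :=
  (forall g, G g -> tree_aut g) /\
  G id /\
  (forall g h, G g -> G h -> G (g \o h)) /\
  (forall g, G g -> exists h, G h /\ cancel g h /\ cancel h g).

Definition self_similar d (G : tmap d -> Prop) : Prop :=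
  is_aut_subgroup G /\ forall g (i : 'I_d), G g -> G (sect i g).

Definition bact d (g : tmap d) (k : bnd d) : bnd d :=
  fun n => nth (k n) (g (mkseq k n.+1)) n.

Definition wcat d (w : word d) (k : bnd d) : bnd d :=
  fun n => if n < size w then nth (k n) w n else k (n - size w).

Definition in_cone d (w : word d) (k : bnd d) : Prop :=
  forall n, n < size w -> k n = nth (k n) w n.

Definition cone_partition d n (ws : 'I_n -> word d) : Prop :=
  forall k : bnd d, exists! i : 'I_n, in_cone (ws i) k.

Definition in_V d (G : tmap d -> Prop) (f : bnd d -> bnd d) : Prop :=
  exists (n : nat) (wp wm : 'I_n -> word d) (j : 'I_n -> 'I_n)
         (gs : 'I_n -> tmap d),
    [/\ cone_partition wp, cone_partition wm, bijective j,
        (forall i, G (gs i)) &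
        (forall i k, f (wcat (wp i) k) = wcat (wm (j i)) (bact (gs i) k))].

Definition lex_lt d (k k' : bnd d) : Prop :=
  exists n, (forall m, m < n -> k m = k' m) /\ k n < k' n.

Definition in_F d (f : bnd d -> bnd d) : Prop :=
  (exists (n : nat) (wp wm : 'I_n -> word d) (j : 'I_n -> 'I_n),
    [/\ cone_partition wp, cone_partition wm, bijective j &
        (forall i k, f (wcat (wp i) k) = wcat (wm (j i)) k)]) /\
  (forall k k', lex_lt k k' -> lex_lt (f k) (f k')).

Definition F_commutator d (c : bnd d -> bnd d) : Prop :=
  exists a b a' b' : bnd d -> bnd d,
    [/\ in_F a, in_F b, cancel a a' /\ cancel a' a, cancel b b' /\ cancel b' b &
        c = a' \o b' \o a \o b].

(* [F_d, F_d]: the subgroup generated by commutators (products of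
   commutators, which is closed under inverses as [a,b]^{-1} = [b,a]). *)
Inductive in_FF d : (bnd d -> bnd d) -> Prop :=
| FF_id : in_FF (@id (bnd d))
| FF_mul c f : F_commutator c -> in_FF f -> in_FF (c \o f).

(* A nontrivial x in V_d(G) moves some point k0. Near k0, x is a prefix
   replacement followed by a tree automorphism, so a long enough prefix u of k0
   spans a cone C(u) that x maps injectively and off itself. The cones
   C(u 0^n (d-1)), n in N, are pairwise disjoint subcones of C(u), and each one
   supports a nontrivial commutator c_n of two copies of the generator x_0 of
   F_d grafted into it. On C(u 0^n (d-1)), c_n x c_n^-1 agrees with x c_n^-1
   (its values have left C(u)) while c_m x c_m^-1 agrees with x for m <> n;
   injectivity of x on C(u) then forces c_n = 1 if the two conjugates are
   equal. So the [F_d, F_d]-conjugates c_n x c_n^-1 are pairwise distinct.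
   Only G <= Aut(T_d) is used, not self-similarity. *)

From mathcomp Require Import all_boot.
From Stdlib Require List FinFun.
From Stdlib Require Import FunctionalExtensionality Classical.

Set Implicit Arguments.
Unset Strict Implicit.
Unset Printing Implicit Defensive.

Lemma count_enum_filter (T : finType) (a : T) (p q r : pred T) :
  (forall c, r c && p c = (c == a) && q c) -> count r [seq c <- enum T | p c] = q a.
Proof.
move=> rpE; rewrite count_filter (@eq_count _ _ (predI (pred1 a) q)) //.
rewrite -count_filter count_uniq_mem ?(mem_filter q) ?mem_enum ?andbT //.
by rewrite filter_uniq // enum_uniq.
Qed.

Lemma find_count1 (T : Type) (a : pred T) (s : seq T) x0 i :
  count a s = 1 -> i < size s -> a (nth x0 s i) -> find a s = i.
Proof.
elim: s i => [//|x s IH] [|i] /=; first by move=> _ _ ->.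
move=> cnt1 lti ai; have : 0 < count a s.
  by rewrite -has_count; apply/(has_nthP x0); exists i.
case: (a x) cnt1; rewrite ?add1n ?add0n; first by case=> ->.
by move=> cnt1 _; rewrite (IH i).
Qed.

Lemma exists_neq_app (A B : Type) (f g : A -> B) : f <> g -> exists a, f a <> g a.
Proof.
move=> fg; apply: NNPP => eq_fg; apply: fg; apply: functional_extensionality => a.
by apply: NNPP => fga; apply: eq_fg; exists a.
Qed.

Lemma list_range_not_injective (T : Type) (f : nat -> T) (l : List.list T) :
  (forall n, List.In (f n) l) -> ~ injective f.
Proof.
move=> f_in f_inj.
have := List.NoDup_incl_length
  (FinFun.Injective_map_NoDup f_inj (List.seq_NoDup (List.length l).+1 0)).
have /[swap]/[apply] : List.incl (List.map f (List.seq 0 (List.length l).+1)) l.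
  by move=> y /List.in_map_iff [n [<- _]]; exact: f_in.
by rewrite List.length_map List.length_seq => /leP; rewrite ltnn.
Qed.

Section InfiniteWords.

Variable d : nat.
Implicit Types (w v : word d) (k : bnd d) (c : 'I_d).

Definition shift m k : bnd d := fun n => k (m + n).

Definition bcons c k : bnd d := fun n => if n is m.+1 then k m else c.

Fixpoint in_coneb w k : bool :=
  if w is c :: w' then (k 0 == c) && in_coneb w' (shift 1 k) else true.

Lemma in_coneP w k : reflect (in_cone w k) (in_coneb w k).
Proof.
elim: w k => [|c w IH] k /=; first by constructor.
apply: (iffP andP) => [[/eqP k0 /IH kw] [|n] //= /kw // | kc].
split; first by apply/eqP; exact: (kc 0).
by apply/IH => n; exact: (kc n.+1).
Qed.

Lemma eq_in_coneb w k k' :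
  (forall m, m < size w -> k m = k' m) -> in_coneb w k = in_coneb w k'.
Proof.
elim: w k k' => [//|c w IH] k k' kk' /=.
by rewrite (kk' 0) // (IH _ (shift 1 k')) // => m; exact: (kk' m.+1).
Qed.

Lemma in_coneb_cat v w k :
  in_coneb (v ++ w) k = in_coneb v k && in_coneb w (shift (size v) k).
Proof. by elim: v k => [|c v IH] k //=; rewrite IH andbA. Qed.

Lemma in_coneb_catl v w k : in_coneb (v ++ w) k -> in_coneb v k.
Proof. by rewrite in_coneb_cat => /andP []. Qed.

Lemma in_coneb_cat_cons_eq v a b s s' k :
  in_coneb (v ++ a :: s) k -> in_coneb (v ++ b :: s') k -> a = b.
Proof.
by rewrite !in_coneb_cat /= => /and3P [_ /eqP <- _] /and3P [_ /eqP].
Qed.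

Lemma wcat_nil k : wcat [::] k = k.
Proof. by apply: functional_extensionality => n; rewrite /wcat /= subn0. Qed.

Lemma wcat_cons c w k : wcat (c :: w) k = bcons c (wcat w k).
Proof.
apply: functional_extensionality => -[|n] //; rewrite /wcat /bcons /= ltnS subSS.
by case: ifP => // nw; exact: set_nth_default.
Qed.

Lemma wcat_cat v w k : wcat (v ++ w) k = wcat v (wcat w k).
Proof. by elim: v => [|c v IH] /=; rewrite ?wcat_nil ?wcat_cons ?IH. Qed.

Lemma in_coneb_wcat w k : in_coneb w (wcat w k).
Proof. by elim: w k => [//|c w IH] k; rewrite wcat_cons /= eqxx IH. Qed.

Lemma shift_wcat w k : shift (size w) (wcat w k) = k.
Proof. by elim: w => [|c w IH]; rewrite ?wcat_nil ?wcat_cons. Qed.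

Lemma wcat_size w k i : wcat w k (size w + i) = k i.
Proof. by rewrite -[RHS](congr1 (@^~ i) (shift_wcat w k)). Qed.

Lemma wcat_shift w k : in_coneb w k -> wcat w (shift (size w) k) = k.
Proof.
elim: w k => [|c w IH] k /=; first by rewrite wcat_nil.
case/andP => /eqP k0 /IH kw; rewrite wcat_cons kw.
by apply: functional_extensionality => -[|n].
Qed.

Lemma wcat_local w k k' n :
  (forall m, m <= n -> k m = k' m) -> wcat w k n = wcat w k' n.
Proof.
move=> kk'; rewrite /wcat; case: ifP => [nw | _]; first exact: set_nth_default.
by apply: kk'; exact: leq_subr.
Qed.

Lemma in_coneb_mkseq k0 L k : in_coneb (mkseq k0 L) k -> forall m, m < L -> k m = k0 m.
Proof. by move=> /in_coneP kL m mL; rewrite kL ?size_mkseq // nth_mkseq. Qed.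

Lemma wcat_small w k k' m : m < size w -> wcat w k m = wcat w k' m.
Proof. by move=> mw; rewrite /wcat mw; exact: set_nth_default. Qed.

Definition lex_monotone (f : bnd d -> bnd d) : Prop :=
  forall k k', lex_lt k k' -> lex_lt (f k) (f k').

Lemma lex_lt_head k k' : k 0 < k' 0 -> lex_lt k k'.
Proof. by exists 0. Qed.

Lemma lex_lt_head_le k k' : lex_lt k k' -> k 0 <= k' 0.
Proof. by case=> -[|n] [kk' lt]; [exact: ltnW | rewrite (kk' 0)]. Qed.

Lemma lex_lt_bcons c k k' : lex_lt k k' -> lex_lt (bcons c k) (bcons c k').
Proof. by case=> n [kk' lt]; exists n.+1; split => // -[|m] //= /kk'. Qed.

Lemma lex_lt_shift m k k' :
  (forall i, i < m -> k i = k' i) -> lex_lt k k' -> lex_lt (shift m k) (shift m k').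
Proof.
move=> eq_m [n [kk' lt]]; case: (ltnP n m) => [nm | mn].
  by move: lt; rewrite eq_m // ltnn.
exists (n - m); split; last by rewrite /shift subnKC.
by move=> i im; apply: kk'; rewrite -ltn_subRL.
Qed.

Lemma lex_lt_wcat w k k' : lex_lt k k' -> lex_lt (wcat w k) (wcat w k').
Proof.
by elim: w => [|c w IH] lt; rewrite ?wcat_nil ?wcat_cons //; apply/lex_lt_bcons/IH.
Qed.

End InfiniteWords.

Arguments in_coneb {d} w k.

Section Supports.

Variable d : nat.
Implicit Types (w : word d) (k : bnd d) (f g : bnd d -> bnd d).

Definition supported_in w f : Prop :=
  forall k, ~~ in_coneb w k -> f k = k.

Lemma supported_in_comp w f g :
  supported_in w f -> supported_in w g -> supported_in w (f \o g).
Proof. by move=> fw gw k kw /=; rewrite gw ?fw. Qed.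

Lemma supported_in_catl w s f : supported_in (w ++ s) f -> supported_in w f.
Proof. by move=> f_ws k kw; apply: f_ws; apply: contra kw; exact: in_coneb_catl. Qed.

Lemma supported_in_inv w f f' : cancel f f' -> supported_in w f -> supported_in w f'.
Proof. by move=> fK fw k kw; rewrite -{1}(fw k kw) fK. Qed.

Lemma supported_in_cone w f f' k :
  cancel f f' -> supported_in w f -> in_coneb w k -> in_coneb w (f k).
Proof.
move=> fK fw kw; apply: contraT => fkw.
have fkk : f k = k := can_inj fK (fw _ fkw).
by rewrite fkk kw in fkw.
Qed.

End Supports.

Section ConeCodes.

Variable d : nat.
Implicit Types (w v : word d) (k : bnd d) (c : 'I_d).

Fixpoint cone_compl w : seq (word d) :=
  if w is c :: w' then
    [seq [:: c'] | c' <- enum 'I_d & c' != c] ++ [seq c :: v | v <- cone_compl w']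
  else [::].

Lemma count_cone_compl w k : count (in_coneb^~ k) (cone_compl w) = ~~ in_coneb w k.
Proof.
elim: w k => [//|c w IH] k /=.
rewrite count_cat !count_map (@count_enum_filter _ (k 0) _ (predC1 c)) /=; last first.
  by move=> c' /=; rewrite andbT eq_sym.
have [k0c | k0c] /= := eqVneq (k 0) c.
  by rewrite -IH; apply: eq_count => v /=; rewrite k0c eqxx.
by rewrite (@eq_count _ _ pred0) ?count_pred0 // => v /=; rewrite (negbTE k0c).
Qed.

Definition cone_code (L : seq (word d)) : Prop :=
  forall k, count (in_coneb^~ k) L = 1.

Lemma cone_code_graft w L :
  cone_code L -> cone_code (cone_compl w ++ [seq w ++ s | s <- L]).
Proof.
move=> codeL k; rewrite count_cat count_cone_compl count_map.
have [kw | kw] /= := boolP (in_coneb w k).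
  by rewrite -(codeL (shift (size w) k)); apply: eq_count => s /=; rewrite in_coneb_cat kw.
by rewrite (@eq_count _ _ pred0) ?count_pred0 // => s /=; rewrite in_coneb_cat (negbTE kw).
Qed.

Lemma cone_partition_of_code n (ws : 'I_n -> word d) L :
  size L = n -> (forall i, ws i = nth [::] L i) -> cone_code L -> cone_partition ws.
Proof.
move=> sizeL wsE codeL k.
have has_k : has (in_coneb^~ k) L by rewrite has_count codeL.
have lt_find : find (in_coneb^~ k) L < n by rewrite -sizeL -has_find.
exists (Ordinal lt_find); split.
  by apply/in_coneP; rewrite wsE; exact: (nth_find [::] has_k).
move=> i /in_coneP; rewrite wsE => ki; apply: val_inj => /=.
by apply: (find_count1 (codeL k)) ki; rewrite sizeL.
Qed.

Lemma cone_compl_disjoint w v k : v \in cone_compl w -> in_coneb v k -> ~~ in_coneb w k.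
Proof.
move=> vw vk; have : 0 < count (in_coneb^~ k) (cone_compl w).
  by rewrite -has_count; apply/hasP; exists v.
by rewrite count_cone_compl; case: (in_coneb w k).
Qed.

Definition prefix_replacement (tbl : seq (word d * word d)) (f : bnd d -> bnd d) : Prop :=
  [/\ cone_code (unzip1 tbl), cone_code (unzip2 tbl) &
      forall p k, p \in tbl -> f (wcat p.1 k) = wcat p.2 k].

Lemma in_F_of_prefix_replacement tbl f :
  prefix_replacement tbl f -> lex_monotone f -> in_F f.
Proof.
move=> [code1 code2 f_tbl] f_lex; split=> //.
exists (size tbl), (nth [::] (unzip1 tbl)), (nth [::] (unzip2 tbl)), id; split.
- exact: cone_partition_of_code (size_map _ _) _ code1.
- exact: cone_partition_of_code (size_map _ _) _ code2.
- by exists id.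
- by move=> i k; rewrite !(nth_map ([::], [::])) //; apply/f_tbl/mem_nth.
Qed.

End ConeCodes.

Section Grafting.

Variable d : nat.
Implicit Types (w : word d) (k : bnd d) (f : bnd d -> bnd d).

Definition graft w f k : bnd d :=
  if in_coneb w k then wcat w (f (shift (size w) k)) else k.

Lemma graft_wcat w f k : graft w f (wcat w k) = wcat w (f k).
Proof. by rewrite /graft in_coneb_wcat shift_wcat. Qed.

Lemma graft_out w f k : ~~ in_coneb w k -> graft w f k = k.
Proof. by rewrite /graft => /negbTE ->. Qed.

Lemma graft_supported w f : supported_in w (graft w f).
Proof. exact: graft_out. Qed.

Lemma graftK w f f' : cancel f f' -> cancel (graft w f) (graft w f').
Proof.
move=> fK k; have [kw | kw] := boolP (in_coneb w k); last by rewrite !graft_out.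
by rewrite -{1}(wcat_shift kw) !graft_wcat fK wcat_shift.
Qed.

Lemma graft_small w f k m : m < size w -> graft w f k m = k m.
Proof.
rewrite /graft; case: ifP => // kw mw.
by rewrite -[in RHS](wcat_shift kw); exact: wcat_small.
Qed.

Lemma graft_lex w f : lex_monotone f -> lex_monotone (graft w f).
Proof.
move=> f_lex k k' kk'; case: (kk') => n [eq_n lt_n].
case: (ltnP n (size w)) => [nw | wn].
  exists n; split; last by rewrite !graft_small.
  by move=> m mn; rewrite !graft_small ?eq_n // (ltn_trans mn).
have eq_w m : m < size w -> k m = k' m by move=> mw; apply: eq_n; exact: leq_trans mw wn.
rewrite /graft (eq_in_coneb eq_w); case: ifP => // _.
by apply/lex_lt_wcat/f_lex; exact: lex_lt_shift.
Qed.

Definition graft_table w (tbl : seq (word d * word d)) : seq (word d * word d) :=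
  [seq (v, v) | v <- cone_compl w] ++ [seq (w ++ p.1, w ++ p.2) | p <- tbl].

Lemma graft_prefix_replacement w tbl f :
  prefix_replacement tbl f -> prefix_replacement (graft_table w tbl) (graft w f).
Proof.
move=> [code1 code2 f_tbl]; split.
- rewrite /unzip1 map_cat -!map_comp map_id (@eq_map _ _ _ (cat w \o fst)) // map_comp.
  exact: cone_code_graft.
- rewrite /unzip2 map_cat -!map_comp map_id (@eq_map _ _ _ (cat w \o snd)) // map_comp.
  exact: cone_code_graft.
move=> p k; rewrite mem_cat => /orP [/mapP [v vw ->] | /mapP [q qtbl ->]] /=.
  exact/graft_out/(cone_compl_disjoint vw)/in_coneb_wcat.
by rewrite !wcat_cat graft_wcat f_tbl.
Qed.

End Grafting.

Section ThompsonGenerator.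

Variable d : nat.
Implicit Types (w : word d.+2) (t k : bnd d.+2) (c : 'I_d.+2).

Lemma ord_lt_max c : c != ord_max -> c < d.+1.
Proof. by rewrite ltn_neqAle -ltnS ltn_ord andbT. Qed.

(* The generator x_0 of F_d, mapping the cone 0c onto c (c <> d-1), 0(d-1) onto
   (d-1)0 and c onto (d-1)c (c <> 0); [ord0] and [ord_max] are the letters 0 and d-1. *)
Definition gen t : bnd d.+2 :=
  if t 0 == ord0 then
    if t 1 == ord_max then bcons ord_max (bcons ord0 (shift 2 t)) else shift 1 t
  else bcons ord_max t.

Definition gen_inv t : bnd d.+2 :=
  if t 0 == ord_max then
    if t 1 == ord0 then bcons ord0 (bcons ord_max (shift 2 t)) else shift 1 t
  else bcons ord0 t.

Lemma genK : cancel gen gen_inv.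
Proof.
move=> t; apply: functional_extensionality => n; rewrite /gen.
have [t0 | t0] := eqVneq (t 0) ord0; last by rewrite /gen_inv /= eqxx (negbTE t0).
have [t1 | t1] := eqVneq (t 1) ord_max; rewrite /gen_inv /shift /=.
  by rewrite ?eqxx; case: n => [|[|n]].
by rewrite (negbTE t1); case: n.
Qed.

Lemma gen_invK : cancel gen_inv gen.
Proof.
move=> t; apply: functional_extensionality => n; rewrite /gen_inv.
have [t0 | t0] := eqVneq (t 0) ord_max; last by rewrite /gen /= (negbTE t0).
have [t1 | t1] := eqVneq (t 1) ord0; rewrite /gen /shift /=.
  by rewrite ?eqxx; case: n => [|[|n]].
by rewrite (negbTE t1); case: n.
Qed.

Lemma gen_lex : lex_monotone gen.
Proof.
move=> t t' tt'; rewrite /gen.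
have [t0 | t0] := eqVneq (t 0) ord0; have [t'0 | t'0] := eqVneq (t' 0) ord0.
- have tt'1 : lex_lt (shift 1 t) (shift 1 t').
    by apply: lex_lt_shift tt' => -[|] // _; rewrite t0 t'0.
  have [t1 | t1] := eqVneq (t 1) ord_max; have [t'1 | t'1] := eqVneq (t' 1) ord_max.
  + have tt'2 : lex_lt (shift 1 (shift 1 t)) (shift 1 (shift 1 t')).
      by apply: lex_lt_shift tt'1 => -[|] // _; exact: etrans t1 (esym t'1).
    by apply/lex_lt_bcons/lex_lt_bcons; exact: tt'2.
  + by move: (lex_lt_head_le tt'1); rewrite /shift /= t1 leqNgt ord_lt_max.
  + exact/lex_lt_head/ord_lt_max.
  + exact: tt'1.
- have [t1 | t1] := eqVneq (t 1) ord_max; last exact/lex_lt_head/ord_lt_max.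
  by apply/lex_lt_bcons/lex_lt_head; rewrite /= lt0n.
- move: (lex_lt_head_le tt'); rewrite t'0 /= leqn0 => /eqP t00.
  by case/eqP: t0; apply: val_inj.
- exact: lex_lt_bcons.
Qed.

Definition gen_table : seq (word d.+2 * word d.+2) :=
  [seq ([:: ord0; c], [:: c]) | c <- enum 'I_d.+2 & c != ord_max] ++
  ([:: ord0; ord_max], [:: ord_max; ord0]) ::
  [seq ([:: c], [:: ord_max; c]) | c <- enum 'I_d.+2 & c != ord0].

Lemma gen_table_code1 : cone_code (unzip1 gen_table).
Proof.
move=> t; rewrite /unzip1 map_cat /= count_cat /= -!map_comp !count_map.
rewrite (@count_enum_filter _ (t 1) _ (fun c => (t 0 == ord0) && (c != ord_max)));
  last first.
  by move=> c /=; rewrite andbT [c == _]eq_sym; case: (t 0 == ord0); rewrite /= ?andbF.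
rewrite (@count_enum_filter _ (t 0) (fun c => c != ord0) (fun c => c != ord0)); last first.
  by move=> c /=; rewrite andbT eq_sym.
by rewrite /shift /= andbT; case: (t 0 == ord0); case: (t 1 == ord_max).
Qed.

Lemma gen_table_code2 : cone_code (unzip2 gen_table).
Proof.
move=> t; rewrite /unzip2 map_cat /= count_cat /= -!map_comp !count_map.
rewrite (@count_enum_filter _ (t 0) _ (fun c => c != ord_max)); last first.
  by move=> c /=; rewrite andbT eq_sym.
rewrite (@count_enum_filter _ (t 1) (fun c => c != ord0)
                            (fun c => (t 0 == ord_max) && (c != ord0))); last first.
  by move=> c /=; rewrite andbT [c == _]eq_sym; case: (t 0 == ord_max); rewrite /= ?andbF.
by rewrite /shift /= andbT; case: (t 0 == ord_max); case: (t 1 == ord0).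
Qed.

Lemma gen_prefix_replacement : prefix_replacement gen_table gen.
Proof.
split; [exact: gen_table_code1 | exact: gen_table_code2 | move=> p k].
rewrite mem_cat inE => /or3P [/mapP [c] | /eqP -> | /mapP [c]].
- rewrite mem_filter => /andP [/negbTE cmax _] -> /=.
  by rewrite !wcat_cons !wcat_nil /gen /bcons /= cmax.
- by rewrite !wcat_cons !wcat_nil /gen /bcons /= !eqxx.
- rewrite mem_filter => /andP [/negbTE c0 _] -> /=.
  by rewrite !wcat_cons !wcat_nil /gen /bcons /= c0.
Qed.

Lemma graft_gen_in_F w : in_F (graft w gen).
Proof.
apply: in_F_of_prefix_replacement (graft_lex w gen_lex).
exact: graft_prefix_replacement gen_prefix_replacement.
Qed.

Definition comm_at w : bnd d.+2 -> bnd d.+2 :=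
  graft w gen_inv \o graft (w ++ [:: ord0]) gen_inv \o
  graft w gen \o graft (w ++ [:: ord0]) gen.

Definition comm_at_inv w : bnd d.+2 -> bnd d.+2 :=
  graft (w ++ [:: ord0]) gen_inv \o graft w gen_inv \o
  graft (w ++ [:: ord0]) gen \o graft w gen.

Lemma comm_atK w : cancel (comm_at w) (comm_at_inv w).
Proof.
by move=> k; rewrite /comm_at /comm_at_inv /= !(graftK _ genK, graftK _ gen_invK).
Qed.

Lemma comm_at_invK w : cancel (comm_at_inv w) (comm_at w).
Proof.
by move=> k; rewrite /comm_at /comm_at_inv /= !(graftK _ genK, graftK _ gen_invK).
Qed.

Lemma comm_at_in_FF w : in_FF (comm_at w).
Proof.
have comm : F_commutator (comm_at w).
  exists (graft w gen), (graft (w ++ [:: ord0]) gen),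
         (graft w gen_inv), (graft (w ++ [:: ord0]) gen_inv).
  split; [exact: graft_gen_in_F | exact: graft_gen_in_F | | | by []];
    by split; apply: graftK; [exact: genK | exact: gen_invK].
exact: FF_mul comm (@FF_id _).
Qed.

Lemma comm_at_supported w : supported_in w (comm_at w).
Proof.
have graft0 f : supported_in w (graft (w ++ [:: ord0]) f).
  by apply: (@supported_in_catl _ _ [:: ord0]); exact: graft_supported.
rewrite /comm_at; repeat apply: supported_in_comp.
all: exact: graft_supported || exact: graft0.
Qed.

Lemma comm_at_nontrivial w : exists p, comm_at w p <> p.
Proof.
pose z : bnd d.+2 := fun=> ord0.
pose p := wcat w (bcons ord0 (bcons ord_max z)).
have pE : p = wcat (w ++ [:: ord0]) (bcons ord_max z).
  by rewrite wcat_cat wcat_cons wcat_nil.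
have ap : graft w gen p = wcat w (bcons ord_max (bcons ord0 z)).
  by rewrite graft_wcat /gen /= eqxx.
have bp : graft (w ++ [:: ord0]) gen p
          = wcat w (bcons ord0 (bcons ord_max (bcons ord_max z))).
  by rewrite pE graft_wcat wcat_cat wcat_cons wcat_nil.
have abp : graft w gen (graft (w ++ [:: ord0]) gen p)
           = wcat w (bcons ord_max (bcons ord0 (bcons ord_max z))).
  by rewrite bp graft_wcat /gen /= eqxx.
have bap : graft (w ++ [:: ord0]) gen (graft w gen p) = graft w gen p.
  by apply: graft_out; rewrite ap in_coneb_cat shift_wcat andbF.
exists p => fixed.
have := congr1 (graft (w ++ [:: ord0]) gen \o graft w gen) fixed.
rewrite /= !(graftK _ gen_invK) bap abp ap => /(congr1 (@^~ (size w + 2))).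
by rewrite !wcat_size.
Qed.

Definition comb_word (u : word d.+2) n : word d.+2 := u ++ nseq n ord0 ++ [:: ord_max].

Lemma comb_word_prefix u n k : in_coneb (comb_word u n) k -> in_coneb u k.
Proof. exact: in_coneb_catl. Qed.

Lemma comb_word_disjoint u n m :
  n != m -> forall k, in_coneb (comb_word u n) k -> ~~ in_coneb (comb_word u m) k.
Proof.
move=> nm k kn; apply/negP => km.
wlog lt_nm : n m nm kn km / n < m.
  move=> gen_nm; case: (ltngtP n m) => [lt | gt | eq]; last by rewrite eq eqxx in nm.
    exact: gen_nm nm kn km lt.
  by apply: (gen_nm m n) km kn gt; rewrite eq_sym.
have [j mE] : exists j, m = n + j.+1 by exists (m - n.+1); rewrite addnS -addSn subnKC.
rewrite mE /comb_word nseqD -catA catA in km; rewrite /comb_word catA in kn.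
by have := in_coneb_cat_cons_eq kn km.
Qed.

End ThompsonGenerator.

Section NekrashevychElements.

Variable d : nat.
Implicit Types (g : tmap d) (k : bnd d) (w : word d).

Lemma tree_aut_mkseq g k n : tree_aut g -> g (mkseq k n) = mkseq (bact g k) n.
Proof.
move=> [_ [g0 g_child]]; elim: n => [|n IH]; first by rewrite g0.
rewrite !mkseqS; have [j gE] := g_child (mkseq k n) (k n).
by rewrite gE IH /bact mkseqS gE IH nth_rcons size_mkseq ltnn eqxx.
Qed.

Lemma bact_inj g : tree_aut g -> injective (bact g).
Proof.
move=> g_aut k k' kk'; have [[g' gK _] _] := g_aut.
apply: functional_extensionality => n.
have : g (mkseq k n.+1) = g (mkseq k' n.+1) by rewrite !tree_aut_mkseq // kk'.
by move/(can_inj gK)/(congr1 (nth (k n) ^~ n)); rewrite !nth_mkseq.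
Qed.

Lemma bact_local g k k' n :
  (forall m, m <= n -> k m = k' m) -> bact g k n = bact g k' n.
Proof.
move=> kk'; rewrite /bact kk' //; congr (nth _ (g _) _).
by apply/eq_in_map => m; rewrite mem_iota => /andP [_ mn]; apply: kk'.
Qed.

Lemma in_V_local G x :
  (forall g, G g -> tree_aut g) -> in_V G x ->
  forall k0, exists P W g, [/\ tree_aut g, in_coneb P k0 &
    forall k, in_coneb P k -> x k = wcat W (bact g (shift (size P) k))].
Proof.
move=> autG [n [wp [wm [j [gs [wp_part _ _ Ggs xE]]]]]] k0.
have [i [/in_coneP k0i _]] := wp_part k0.
exists (wp i), (wm (j i)), (gs i); split; [exact: autG | exact: k0i |].
by move=> k ki; rewrite -{1}(wcat_shift ki) xE.
Qed.

Lemma in_V_displaced_cone G x :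
  (forall g, G g -> tree_aut g) -> in_V G x -> x <> id ->
  exists u, (forall k, in_coneb u k -> ~~ in_coneb u (x k)) /\
            {in in_coneb u &, injective x}.
Proof.
move=> autG xV x_id; have [k0 xk0] := exists_neq_app x_id.
have [N xk0N] := exists_neq_app xk0.
have [P [W [g [g_aut k0P xE]]]] := in_V_local autG xV k0.
pose u := mkseq k0 (size P + N.+1).
have u_agree k : in_coneb u k -> forall m, m <= size P + N -> k m = k0 m.
  by move=> /in_coneb_mkseq ku m; rewrite -ltnS -addnS; exact: ku.
have uP k : in_coneb u k -> in_coneb P k.
  move=> ku; rewrite (eq_in_coneb (k' := k0)) // => m mP.
  exact: u_agree ku m (ltnW (ltn_addr N mP)).
have xN k : in_coneb u k -> x k N = x k0 N.
  move=> ku; rewrite (xE k (uP k ku)) (xE k0 k0P).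
  apply: wcat_local => m mN; apply: bact_local => m' m'm.
  by rewrite /shift u_agree // leq_add2l (leq_trans m'm mN).
exists u; split.
  move=> k ku; apply/negP => xku; apply: xk0N.
  by rewrite -(xN k ku); apply: u_agree xku _ (leq_addl _ _).
move=> k k' /uP kP /uP k'P; rewrite !xE // => /(congr1 (shift (size W))).
rewrite !shift_wcat => /(bact_inj g_aut) kk'.
by rewrite -(wcat_shift kP) -(wcat_shift k'P) kk'.
Qed.

End NekrashevychElements.

Section ConjugatesBySupportedElements.

Variables (d : nat) (x : bnd d -> bnd d) (u : word d).
Hypothesis x_displaces : forall k, in_coneb u k -> ~~ in_coneb u (x k).
Hypothesis x_inj : {in in_coneb u &, injective x}.

Lemma conj_supported_neq v v' (c c_inv c' c'_inv : bnd d -> bnd d) :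
  (forall k, in_coneb v k -> in_coneb u k) ->
  (forall k, in_coneb v' k -> in_coneb u k) ->
  (forall k, in_coneb v k -> ~~ in_coneb v' k) ->
  cancel c c_inv -> cancel c_inv c -> supported_in v c -> (exists p, c p <> p) ->
  cancel c' c'_inv -> supported_in v' c' ->
  c \o x \o c_inv <> c' \o x \o c'_inv.
Proof.
move=> vu v'u vv' cK c_invK cv [p cp] c'K c'v conj_eq.
have c_inv_v := supported_in_inv cK cv.
have c'_inv_v' := supported_in_inv c'K c'v.
have c_inv_fixes q : in_coneb v q -> c_inv q = q.
  move=> qv; have c_inv_qv := supported_in_cone c_invK c_inv_v qv.
  have lhs : (c \o x \o c_inv) q = x (c_inv q).
    by apply: cv; exact: contra (vu _) (x_displaces (vu _ c_inv_qv)).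
  have rhs : (c' \o x \o c'_inv) q = x q.
    rewrite /= c'_inv_v' ?vv' //; apply: c'v.
    exact: contra (v'u _) (x_displaces (vu _ qv)).
  by apply: x_inj; [exact: vu | exact: vu | rewrite -lhs -rhs conj_eq].
have pv : in_coneb v p by apply: contraT => /cv.
by apply: cp; rewrite -[in RHS](cK p) c_inv_fixes //; exact: supported_in_cone cK cv pv.
Qed.

End ConjugatesBySupportedElements.

Theorem mainTheorem9 (d : nat) (hd : 2 <= d) (G : tmap d -> Prop) :
  self_similar G ->
  forall x : bnd d -> bnd d, in_V G x -> x <> id ->
  ~ (exists l : List.list (bnd d -> bnd d),
       forall h y : bnd d -> bnd d, in_FF h -> y \o h = h \o x -> List.In y l).
Proof.
case: d hd G => [|[|d]] // _ G [[autG _] _] x xV x_id [l conjs_in_l].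
have [u [x_displaces x_inj]] := in_V_displaced_cone autG xV x_id.
pose y n := comm_at (comb_word u n) \o x \o comm_at_inv (comb_word u n).
apply: (@list_range_not_injective _ y l).
  move=> n; apply: (conjs_in_l (comm_at (comb_word u n))); first exact: comm_at_in_FF.
  by apply: functional_extensionality => k; rewrite /y /= comm_atK.
move=> n m y_nm; apply/eqP; apply: contraT => nm; exfalso.
move: y_nm; rewrite /y; apply: (conj_supported_neq x_displaces x_inj
  (@comb_word_prefix _ u n) (@comb_word_prefix _ u m) (comb_word_disjoint nm)).
- exact: comm_atK.
- exact: comm_at_invK.
- exact: comm_at_supported.
- exact: comm_at_nontrivial.
- exact: comm_atK.
- exact: comm_at_supported.
Qed.
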